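(* Consider the bidding-club model described in the context, and an agent $i$ who belongs to a bidding club of size $k\ge 2$. Compare two situations. - Situation (a): agents play the equilibrium in which all invited agents accept and truthfully report their valuations, and singletons bid $b^e(v,P^{n,1})$ after the announcement $n$. - Situation (b): agent $i$'s bidding club does not exist, and its $k$ agents (including $i$) participate directly in the main auction as singleton bidders. In this situation all agents follow the same strategies as in (a): singletons bid $b^e(v,P^{n',1})$, where $n'$ is the announced number of registered bidders, and members of other clubs accept and report truthfully. Then agent $i$'s expected utility in situation (a) is higher than in situation (b).
   Context: A single indivisible good is sold by a first-price auction with participation revelation. The auction proceeds as follows: (i) agents register; (ii) the auctioneer announces the number $n$ of registered bidders; (iii) registered bidders submit sealed bids; (iv) the highest bidder wins and pays his bid, and all others pay $0$. There is no participation fee. Agents are risk-neutral with independent private valuations drawn i.i.d. from a continuous, atomless cumulative distribution function $F$ on the nonnegative reals. A winner with valuation $v$ paying $t$ gets utility $v-t$; a non-winner paying $t$ gets utility $-t$. For an integer $m\ge2$ define $b^e(v,m)=v-F(v)^{-(m-1)}\int_0^vF(u)^{m-1}du$. For a distribution $P=(p_j)$ on the number of agents define $b^e(v,P)=\sum_{j\ge2}p_jb^e(v,j)$. Write $P_{x\ge i}=\sum_{x\ge i}p_x$. Write $P<P'$ iff there is $l$ with $P_{x\ge i}=P'_{x\ge i}$ for all $i<l$ and $P_{x\ge i}<P'_{x\ge i}$ for all $i\ge l$. Standing assumption: $P<P'$ implies $b^e(v,P)<b^e(v,P')$ for all $v$. Environment. The number $n_c$ of potential coordinators has distribution $\gamma_C$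 with $\gamma_C(0)=\gamma_C(1)=0$. Independently, each potential coordinator is associated with a random number of agents with common distribution $\gamma_A$ on $\{1,\dots,\kappa\}$, where $\kappa\ge2$, $\gamma_A(0)=0$ and $\gamma_A(1)<1$. - A potential coordinator with one agent yields a singleton bidder. - A potential coordinator with at least two agents is a bidding club whose agents are all invited. Each agent privately knows his valuation and his club size $s_i$ ($1$ for singletons). All of this is common knowledge. $P^{n,k}$ denotes the distribution of $k+X_1+\dots+X_{n-1}$, where the $X_j$ are i.i.d. with distribution $\gamma_A$. Coordinator protocol for a club of $k$ invited agents: - Each agent declines (and bids independently) or accepts and reports a binding valuation $\mu_i$. - If some agent declines, every accepting agent is registered. After the announcement $n$, the coordinator bids $b^e(\mu_i,P^{n,k})$ for each accepting agent $i$. - If all accept, only the highest reporter $h$ is registered, with bid $b^e(\mu_h,P^{n,1})$. If $h$ wins, he pays that bid to the auctioneer plus $b^e(\mu_h,P^{n,k})-b^e(\mu_h,P^{n,1})$ to the coordinator. *)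

From Stdlib Require Import Reals Arith.
From Coquelicot Require Import Coquelicot.
Open Scope R_scope.

(** Distribution of the sum of [j] i.i.d. random variables with law [g]
    on nat ([g a] = probability of value [a]): [sumdist g j m] = Pr(X_1+...+X_j = m). *)
Fixpoint sumdist (g : nat -> R) (j : nat) (m : nat) : R :=
  match j with
  | O => if Nat.eqb m 0 then 1 else 0
  | S j' => sum_n (fun a => g a * sumdist g j' (m - a)%nat) m
  end.

(** [Pnk gA n k] = P^{n,k}: the law of k + X_1 + ... + X_{n-1}, X_j i.i.d. ~ gA. *)
Definition Pnk (gA : nat -> R) (n k : nat) (m : nat) : R :=
  if (k <=? m)%nat then sumdist gA (n - 1) (m - k) else 0.

Definition be (F : R -> R) (v : R) (m : nat) : R :=
  v - / (F v ^ (m - 1)) * RInt (fun u => F u ^ (m - 1)) 0 v.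

Definition beP (F : R -> R) (v : R) (P : nat -> R) : R :=
  Series (fun j => if (2 <=? j)%nat then P j * be F v j else 0).

Definition tail (P : nat -> R) (i : nat) : R :=
  Series (fun x => if (i <=? x)%nat then P x else 0).

Definition ltP (P P' : nat -> R) : Prop :=
  exists l : nat,
    (forall i, (i < l)%nat -> tail P i = tail P' i) /\
    (forall i, (l <= i)%nat -> tail P i < tail P' i).

Definition is_dist (P : nat -> R) : Prop :=
  (forall j, 0 <= P j) /\ is_series P 1.

(** Probability that an agent with valuation v has the highest valuation
    among N agents with i.i.d. valuations ~ F (F atomless, so ties have
    probability 0).  In both situations all bidders use the same
    nondecreasing bid function, so this is the winning probability. *)
Definition winprob (F : R -> R) (v : R) (N : nat) : R := F v ^ (N - 1).

(** Situation (a): interim expected utility (given valuation v) of agent i in a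
    club of size k.  n = n_c ~ gC coordinators (i's club is one of them); the
    other n-1 coordinators have i.i.d. sizes ~ gA (total size S of them);
    all n coordinators register one bidder, so the announcement is n; agent i
    wins iff his valuation is the highest among the k+S agents, and then pays
    b^e(v,P^{n,1}) to the auctioneer plus b^e(v,P^{n,k})-b^e(v,P^{n,1}) to the
    coordinator. *)
Definition util_a (F : R -> R) (gC gA : nat -> R) (k : nat) (v : R) : R :=
  Series (fun n => gC n *
    Series (fun S => sumdist gA (n - 1) S * winprob F v (k + S) *
                     (v - beP F v (Pnk gA n k)))).

(** Situation (b): agent i's club is dissolved, its k agents register as
    singletons; the announcement is n' = (n-1) + k, and agent i bids
    b^e(v,P^{n',1}), paying it if he wins. *)
Definition util_b (F : R -> R) (gC gA : nat -> R) (k : nat) (v : R) : R :=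
  Series (fun n => gC n *
    Series (fun S => sumdist gA (n - 1) S * winprob F v (k + S) *
                     (v - beP F v (Pnk gA (n - 1 + k) 1)))).

(* In both situations every bidder uses the same increasing bid function, so agent i
   wins exactly when his valuation is the highest among the same agents: the winning
   probabilities coincide and only the price differs.  With Y_j the total size of j
   independent clubs, the price is E[b^e(v, k + Y_(n-1))] in (a) and
   E[b^e(v, 1 + Y_(n-1) + Y'_(k-1))] in (b).  Each of the k - 1 extra clubs has at
   least one agent, and with positive probability k >= 2 of them, while b^e(v, m) is
   strictly increasing in m because int_0^v F^m < F(v) int_0^v F^(m-1).  Hence the
   price is strictly higher in (b). *)

From Stdlib Require Import Reals Arith Lia Lra Psatz Classical.
From Coquelicot Require Import Coquelicot.
Open Scope R_scope.

(* Stated over [R] rather than [AbelianMonoid.sort], so that [ring] applies to the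
   resulting equations. *)
Lemma sum_n_Rext_loc (a b : nat -> R) N :
  (forall m, (m <= N)%nat -> a m = b m) -> sum_n a N = sum_n b N.
Proof. apply sum_n_ext_loc. Qed.

Lemma sum_n_Rle_loc (a b : nat -> R) N :
  (forall m, (m <= N)%nat -> a m <= b m) -> sum_n a N <= sum_n b N.
Proof.
  rewrite !sum_n_Reals; apply sum_Rle.
Qed.

Lemma sum_n_Rlt_term (a b : nat -> R) N m0 :
  (forall m, (m <= N)%nat -> a m <= b m) -> (m0 <= N)%nat -> a m0 < b m0 ->
  sum_n a N < sum_n b N.
Proof.
  intros Hle Hm0 Hlt; induction N as [|N IH].
  - replace m0 with 0%nat in Hlt by lia; rewrite !sum_O; exact Hlt.
  - rewrite !sum_Sn; change (sum_n a N + a (S N) < sum_n b N + b (S N)).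
    destruct (Nat.eq_dec m0 (S N)) as [->|Hne].
    + apply Rplus_le_lt_compat; [apply sum_n_Rle_loc; intros; apply Hle|]; auto.
    + apply Rplus_lt_le_compat; [apply IH; intros|apply Hle]; auto; lia.
Qed.

Lemma sum_n_trunc (a : nat -> R) M N :
  (forall m, (M < m)%nat -> a m = 0) -> (M <= N)%nat -> sum_n a N = sum_n a M.
Proof.
  intros Ha HMN; induction HMN as [|N HMN IH]; [reflexivity|].
  rewrite sum_Sn, IH, Ha by lia; apply Rplus_0_r.
Qed.

Lemma Series_finite (a : nat -> R) N :
  (forall m, (N < m)%nat -> a m = 0) -> Series a = sum_n a N.
Proof.
  intros Ha; apply is_series_unique.
  apply (filterlim_ext_loc (fun _ => sum_n a N)); [|apply filterlim_const].
  exists N; intros n Hn; symmetry; apply sum_n_trunc; auto.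
Qed.

Lemma sum_n_Rmult_l (a : nat -> R) c N :
  sum_n (fun m => c * a m) N = c * sum_n a N.
Proof. exact (sum_n_mult_l c a N). Qed.

Lemma sum_n_Rmult_r (a : nat -> R) c N :
  sum_n (fun m => a m * c) N = sum_n a N * c.
Proof. exact (sum_n_mult_r c a N). Qed.

Lemma sum_n_antidiagonal (u : nat -> nat -> R) N :
  sum_n (fun m => sum_n (fun a => u a (m - a)%nat) m) N =
  sum_n (fun a => sum_n (u a) (N - a)) N.
Proof.
  induction N as [|N IH]; [reflexivity|].
  rewrite sum_Sn, IH, !sum_Sn, Nat.sub_diag, sum_O.
  rewrite (sum_n_ext_loc (fun a => sum_n (u a) (S N - a))
             (fun a => plus (sum_n (u a) (N - a)) (u a (S N - a)%nat))).
  - rewrite sum_n_plus; apply plus_assoc.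
  - intros a Ha; replace (S N - a)%nat with (S (N - a)) by lia; apply sum_Sn.
Qed.

Lemma is_series_exists_pos (p : nat -> R) l :
  (forall n, 0 <= p n) -> is_series p l -> 0 < l -> exists n, 0 < p n.
Proof.
  intros Hp Hl Hl_pos; apply NNPP; intros Hnone.
  assert (Hzero : forall n, p n = 0).
  { intros n; destruct (Hp n) as [Hn|]; auto; exfalso; apply Hnone; exists n; auto. }
  rewrite <- (is_series_unique _ _ Hl), (Series_finite _ 0) in Hl_pos by auto.
  rewrite sum_O, Hzero in Hl_pos; lra.
Qed.

Lemma Series_lt (a b : nat -> R) n0 :
  ex_series a -> ex_series b -> (forall n, a n <= b n) -> a n0 < b n0 ->
  Series a < Series b.
Proof.
  intros Ha Hb Hle Hlt.
  set (d := fun n => b n - a n).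
  assert (Hd : ex_series d)
    by apply (ex_series_minus (K := R_AbsRing) (V := R_NormedModule) _ _ Hb Ha).
  assert (Hpartial : 0 < sum_n d n0).
  { rewrite <- (Rmult_0_r (INR (S n0))), <- sum_n_const.
    apply (sum_n_Rlt_term _ _ _ n0); auto.
    - intros m _; unfold d; specialize (Hle m); lra.
    - unfold d; lra. }
  assert (Htrunc : Series (fun n => if (n <=? n0)%nat then d n else 0) = sum_n d n0).
  { rewrite (Series_finite _ n0).
    - apply sum_n_Rext_loc; intros m Hm.
      replace (m <=? n0)%nat with true by (symmetry; apply Nat.leb_le; lia); auto.
    - intros m Hm.
      replace (m <=? n0)%nat with false by (symmetry; apply Nat.leb_nle; lia); auto. }
  assert (sum_n d n0 <= Series d).
  { rewrite <- Htrunc; apply Series_le; auto; intros n; unfold d.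
    specialize (Hle n); destruct (n <=? n0)%nat; lra. }
  unfold d in *; rewrite Series_minus in * by auto; lra.
Qed.

Lemma ex_series_weighted (p x : nat -> R) M :
  (forall n, 0 <= p n) -> ex_series p -> (forall n, Rabs (x n) <= M) ->
  ex_series (fun n => p n * x n).
Proof.
  intros Hp Hs Hx.
  apply (ex_series_le (K := R_AbsRing) (V := R_CompleteNormedModule) _ (fun n => p n * M)).
  - intros n; change (Rabs (p n * x n) <= p n * M).
    rewrite Rabs_mult, Rabs_pos_eq by auto; apply Rmult_le_compat_l; auto.
  - apply ex_series_scal_r; auto.
Qed.

Lemma Series_weighted_lt (p x y : nat -> R) M :
  (forall n, 0 <= p n) -> is_series p 1 ->
  (forall n, Rabs (x n) <= M) -> (forall n, Rabs (y n) <= M) -> (forall n, x n < y n) ->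
  Series (fun n => p n * x n) < Series (fun n => p n * y n).
Proof.
  intros Hp Hs Hx Hy Hxy.
  destruct (is_series_exists_pos p 1 Hp Hs Rlt_0_1) as [n0 Hn0].
  assert (Hex : ex_series p) by (exists 1; auto).
  apply (Series_lt _ _ n0); try (apply (ex_series_weighted _ _ M); auto).
  - intros n; apply Rmult_le_compat_l; auto; left; auto.
  - apply Rmult_lt_compat_l; auto.
Qed.

Lemma nondecreasing_le_lim (f : R -> R) l x :
  (forall a b, a <= b -> f a <= f b) -> is_lim f p_infty (Finite l) -> f x <= l.
Proof.
  intros Hf Hl.
  apply (is_lim_le_loc (fun _ => f x) f p_infty (f x) l); [|apply is_lim_const|auto].
  exists x; intros y Hy; apply Hf; lra.
Qed.

Section SumOfDraws.

Variables (g : nat -> R) (kap : nat).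
Hypothesis g_supp : forall a, (kap < a)%nat -> g a = 0.

Lemma sumdist_supp j m : (j * kap < m)%nat -> sumdist g j m = 0.
Proof.
  revert m; induction j as [|j IH]; intros m Hm.
  - destruct m; [lia|reflexivity].
  - simpl; rewrite sum_n_Reals; apply sum_eq_R0; intros a Ha.
    destruct (le_lt_dec a kap).
    + rewrite IH by (simpl in Hm; lia); apply Rmult_0_r.
    + rewrite g_supp by lia; apply Rmult_0_l.
Qed.

Lemma le_supp_of_pos k : 0 < g k -> (k <= kap)%nat.
Proof.
  intros Hk; destruct (le_lt_dec k kap); auto.
  rewrite g_supp in Hk by lia; lra.
Qed.

(* [Esum g kap j h] is the expectation of [h (X_1 + ... + X_j)] for independent [X_i]
   of law [g], which is supported in [0, kap]. *)
Definition Esum j (h : nat -> R) : R :=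
  sum_n (fun m => sumdist g j m * h m) (j * kap).

Lemma Esum_trunc j h N : (j * kap <= N)%nat ->
  sum_n (fun m => sumdist g j m * h m) N = Esum j h.
Proof.
  intros HN; apply sum_n_trunc; auto.
  intros m Hm; rewrite sumdist_supp by lia; apply Rmult_0_l.
Qed.

Lemma Series_sumdist j h : Series (fun m => sumdist g j m * h m) = Esum j h.
Proof.
  apply Series_finite; intros m Hm; rewrite sumdist_supp by lia; apply Rmult_0_l.
Qed.

Lemma Esum_mul_r j h c : Esum j (fun y => h y * c) = Esum j h * c.
Proof.
  unfold Esum; rewrite <- sum_n_Rmult_r; apply sum_n_Rext_loc; intros; ring.
Qed.

Lemma Series_sumdist_mul_r j h c :
  Series (fun m => sumdist g j m * h m * c) = Esum j h * c.
Proof.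
  rewrite <- Esum_mul_r, <- Series_sumdist; apply Series_ext; intros; ring.
Qed.

Lemma Esum_ext j h1 h2 : (forall y, h1 y = h2 y) -> Esum j h1 = Esum j h2.
Proof. intros H; apply sum_n_Rext_loc; intros; rewrite H; reflexivity. Qed.

Lemma Esum_0 h : Esum 0 h = h 0%nat.
Proof. unfold Esum; simpl; rewrite sum_O; simpl; ring. Qed.

Lemma Esum_S j h :
  Esum (S j) h = sum_n (fun a => g a * Esum j (fun b => h (a + b)%nat)) kap.
Proof.
  set (N := (S j * kap)%nat); unfold Esum at 1; fold N.
  rewrite (sum_n_Rext_loc _
    (fun m => sum_n (fun a => g a * sumdist g j (m - a) * h (a + (m - a))%nat) m)).
  2:{ intros m _; simpl sumdist; rewrite <- sum_n_Rmult_r.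
      apply sum_n_Rext_loc; intros a Ha; do 2 f_equal; lia. }
  rewrite (sum_n_antidiagonal (fun a b => g a * sumdist g j b * h (a + b)%nat)).
  rewrite (sum_n_Rext_loc _ (fun a => g a * Esum j (fun b => h (a + b)%nat))).
  - apply sum_n_trunc; [intros a Ha; rewrite g_supp by lia; ring|unfold N; simpl; lia].
  - intros a Ha; destruct (le_lt_dec a kap).
    + rewrite <- (Esum_trunc j _ (N - a)) by (unfold N; simpl; lia).
      rewrite <- sum_n_Rmult_l; apply sum_n_Rext_loc; intros; ring.
    + rewrite g_supp by lia; rewrite Rmult_0_l, sum_n_Reals; apply sum_eq_R0.
      intros; ring.
Qed.

Hypothesis g_nonneg : forall a, 0 <= g a.

Lemma Esum_le j h1 h2 : (forall y, h1 y <= h2 y) -> Esum j h1 <= Esum j h2.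
Proof.
  revert h1 h2; induction j as [|j IH]; intros h1 h2 H.
  - rewrite !Esum_0; auto.
  - rewrite !Esum_S; apply sum_n_Rle_loc; intros a _.
    apply Rmult_le_compat_l; auto.
Qed.

Lemma Esum_lt k j h1 h2 : 0 < g k -> (forall y, h1 y < h2 y) -> Esum j h1 < Esum j h2.
Proof.
  intros Hk; pose proof (le_supp_of_pos k Hk) as Hkap.
  revert h1 h2; induction j as [|j IH]; intros h1 h2 H.
  - rewrite !Esum_0; auto.
  - rewrite !Esum_S; apply (sum_n_Rlt_term _ _ _ k); auto.
    + intros a _; apply Rmult_le_compat_l; auto; left; auto.
    + apply Rmult_lt_compat_l; auto.
Qed.

Hypothesis g_sum : sum_n g kap = 1.

Lemma sum_n_weighted_const c : sum_n (fun a => g a * c) kap = c.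
Proof. rewrite sum_n_Rmult_r, g_sum; apply Rmult_1_l. Qed.

Lemma Esum_const j c : Esum j (fun _ => c) = c.
Proof.
  induction j as [|j IH]; [apply Esum_0|].
  rewrite Esum_S, (sum_n_Rext_loc _ (fun a => g a * c)).
  - apply sum_n_weighted_const.
  - intros a _; rewrite IH; reflexivity.
Qed.

Lemma Esum_pos k j h : 0 < g k -> (forall y, 0 < h y) -> 0 < Esum j h.
Proof. intros; rewrite <- (Esum_const j 0); apply (Esum_lt k); auto. Qed.

Lemma Esum_bounds j h lo hi :
  (forall y, lo <= h y <= hi) -> lo <= Esum j h <= hi.
Proof.
  intros H; rewrite <- (Esum_const j lo), <- (Esum_const j hi) at 1.
  split; apply Esum_le; apply H.
Qed.

Hypothesis g_0 : g 0%nat = 0.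

Lemma Esum_add_draws_ge t j f :
  (forall m m', (m <= m')%nat -> f m <= f m') ->
  Esum j (fun y => f (t + y)%nat) <= Esum (t + j) f.
Proof.
  revert f; induction t as [|t IH]; intros f Hf; [apply Rle_refl|].
  simpl (S t + j)%nat; rewrite Esum_S.
  rewrite <- (sum_n_weighted_const (Esum j (fun y => f (S t + y)%nat))).
  apply sum_n_Rle_loc; intros [|a] _.
  - rewrite g_0, !Rmult_0_l; apply Rle_refl.
  - apply Rmult_le_compat_l; auto.
    apply Rle_trans with (Esum j (fun y => f (S a + (t + y))%nat)).
    + apply Esum_le; intros y; apply Hf; lia.
    + apply (IH (fun y => f (S a + y)%nat)); intros m m' Hm; apply Hf; lia.
Qed.

Lemma Esum_add_draws_gt k t j f : (2 <= k)%nat -> 0 < g k ->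
  (forall m m', (m <= m')%nat -> f m <= f m') ->
  (forall m m', (1 <= m)%nat -> (m < m')%nat -> f m < f m') ->
  Esum j (fun y => f (S t + y)%nat) < Esum (S t + j) f.
Proof.
  intros Hk Hgk Hf Hf_strict.
  assert (Hshift : forall a, Esum j (fun y => f (a + (t + y))%nat) <=
                             Esum (t + j) (fun y => f (a + y)%nat)).
  { intros a; apply (Esum_add_draws_ge t j (fun y => f (a + y)%nat)).
    intros m m' Hm; apply Hf; lia. }
  simpl (S t + j)%nat; rewrite Esum_S.
  rewrite <- (sum_n_weighted_const (Esum j (fun y => f (S t + y)%nat))).
  apply (sum_n_Rlt_term _ _ _ k); [intros [|a] _| apply le_supp_of_pos; auto|].
  - rewrite g_0, !Rmult_0_l; apply Rle_refl.
  - apply Rmult_le_compat_l; auto.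
    eapply Rle_trans; [|apply Hshift].
    apply Esum_le; intros y; apply Hf; lia.
  - apply Rmult_lt_compat_l; auto.
    eapply Rlt_le_trans; [|apply Hshift].
    apply (Esum_lt k); auto; intros y; apply Hf_strict; lia.
Qed.

End SumOfDraws.

Definition be0 (F : R -> R) (v : R) (m : nat) : R :=
  if (2 <=? m)%nat then be F v m else 0.

Section Bids.

Variables (F : R -> R) (v : R).
Hypothesis F_cont : forall x, continuity_pt F x.
Hypothesis F_mono : forall x y, x <= y -> F x <= F y.
Hypothesis F_nonpos : forall x, x <= 0 -> F x = 0.
Hypothesis Fv_pos : 0 < F v.

Lemma F_nonneg x : 0 <= F x.
Proof.
  destruct (Rle_lt_dec x 0) as [Hx|Hx]; [rewrite F_nonpos; lra|].
  rewrite <- (F_nonpos 0) by lra; apply F_mono; lra.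
Qed.

Lemma v_pos : 0 < v.
Proof.
  destruct (Rle_lt_dec v 0) as [Hv|Hv]; auto.
  rewrite F_nonpos in Fv_pos by auto; lra.
Qed.

Lemma continuous_Fpow q x : continuous (fun u => F u ^ q) x.
Proof.
  induction q as [|q IH]; [apply continuous_const|].
  apply (continuous_mult (K := R_AbsRing)); auto.
  apply continuity_pt_filterlim, F_cont.
Qed.

Lemma ex_RInt_Fpow q a b : ex_RInt (fun u => F u ^ q) a b.
Proof.
  apply (ex_RInt_continuous (V := R_CompleteNormedModule)).
  intros; apply continuous_Fpow.
Qed.

Lemma RInt_Fpow_bounds q : 0 <= RInt (fun u => F u ^ q) 0 v <= v * F v ^ q.
Proof.
  pose proof v_pos; split.
  - apply RInt_ge_0; [lra|apply ex_RInt_Fpow|].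
    intros; apply pow_le, F_nonneg.
  - replace (v * F v ^ q) with (RInt (fun _ => F v ^ q) 0 v)
      by (rewrite RInt_const; simpl; unfold scal; simpl; unfold mult; simpl; ring).
    apply RInt_le; [lra|apply ex_RInt_Fpow|apply ex_RInt_const|].
    intros u Hu; apply pow_incr; split; [apply F_nonneg|apply F_mono; lra].
Qed.

Lemma be_bounds m : 0 <= be F v m <= v.
Proof.
  pose proof (RInt_Fpow_bounds (m - 1)) as HI.
  assert (HP : 0 < F v ^ (m - 1)) by (apply pow_lt; auto).
  set (P := F v ^ (m - 1)) in *; set (I := RInt (fun u => F u ^ (m - 1)) 0 v) in *.
  assert (0 <= / P * I <= v).
  { split; [apply Rmult_le_pos; [left; apply Rinv_0_lt_compat|]; lra|].
    apply Rmult_le_reg_l with P; auto.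
    rewrite <- Rmult_assoc, Rinv_r, Rmult_1_l by lra; lra. }
  unfold be; fold P I; lra.
Qed.

Lemma F_attains c : 0 < c < F v -> exists u, 0 <= u <= v /\ F u = c.
Proof.
  intros Hc.
  destruct (IVT (fun x => F x - c) 0 v) as [u [Hu Hfu]].
  - intros x; apply continuity_pt_minus; [apply F_cont|apply continuity_pt_const].
    intros ? ?; reflexivity.
  - apply v_pos.
  - rewrite F_nonpos; lra.
  - lra.
  - exists u; split; auto; lra.
Qed.

Lemma continuous_Fpow_gap q x : continuous (fun u => F u ^ q * (F v - F u)) x.
Proof.
  apply (continuous_mult (K := R_AbsRing)); [apply continuous_Fpow|].
  apply (continuous_minus (K := R_AbsRing) (V := R_NormedModule));
    [apply continuous_const|apply continuity_pt_filterlim, F_cont].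
Qed.

(* The integral is bounded below on the interval where [F] lies between [F v / 3]
   and [2 F v / 3]. *)
Lemma RInt_Fpow_gap_pos q : 0 < RInt (fun u => F u ^ q * (F v - F u)) 0 v.
Proof.
  set (p := F v); set (G := fun u => F u ^ q * (p - F u)).
  assert (HG_int : forall a b, ex_RInt G a b).
  { intros; apply (ex_RInt_continuous (V := R_CompleteNormedModule)).
    intros; apply continuous_Fpow_gap. }
  assert (HG_nonneg : forall a b, 0 <= a <= b -> b <= v -> 0 <= RInt G a b).
  { intros a b Hab Hb; apply RInt_ge_0; [lra|auto|intros x Hx].
    apply Rmult_le_pos; [apply pow_le, F_nonneg|].
    assert (F x <= p) by (apply F_mono; lra); lra. }
  destruct (F_attains (p / 3)) as [u1 [Hu1 Fu1]]; [unfold p; lra|].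
  destruct (F_attains (2 * p / 3)) as [u2 [Hu2 Fu2]]; [unfold p; lra|].
  assert (Hu12 : u1 < u2).
  { destruct (Rlt_le_dec u1 u2) as [|Hle]; auto.
    apply F_mono in Hle; unfold p in *; lra. }
  assert (0 < RInt G u1 u2).
  { apply RInt_gt_0; [lra| |intros; apply continuous_Fpow_gap]; intros x Hx.
    assert (p / 3 <= F x) by (rewrite <- Fu1; apply F_mono; lra).
    assert (F x <= 2 * p / 3) by (rewrite <- Fu2; apply F_mono; lra).
    apply Rmult_lt_0_compat; [apply pow_lt|]; unfold p in *; lra. }
  rewrite <- (RInt_Chasles G 0 u1 v), <- (RInt_Chasles G u1 u2 v); auto.
  assert (0 <= RInt G 0 u1) by (apply HG_nonneg; lra).
  assert (0 <= RInt G u2 v) by (apply HG_nonneg; lra).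
  unfold plus; simpl; lra.
Qed.

Lemma RInt_Fpow_succ_lt q :
  RInt (fun u => F u ^ S q) 0 v < F v * RInt (fun u => F u ^ q) 0 v.
Proof.
  assert (RInt (fun u => F u ^ q * (F v - F u)) 0 v =
          F v * RInt (fun u => F u ^ q) 0 v - RInt (fun u => F u ^ S q) 0 v).
  { rewrite <- (RInt_scal (V := R_CompleteNormedModule)) by apply ex_RInt_Fpow.
    rewrite <- (RInt_minus (V := R_CompleteNormedModule));
      [|apply (ex_RInt_scal (V := R_NormedModule)), ex_RInt_Fpow|apply ex_RInt_Fpow].
    apply RInt_ext; intros x _; unfold scal, minus, plus, opp, mult; simpl.
    unfold mult; simpl; ring. }
  pose proof (RInt_Fpow_gap_pos q); lra.
Qed.

Lemma be_lt_succ q : be F v (S q) < be F v (S (S q)).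
Proof.
  unfold be; simpl (S q - 1)%nat; simpl (S (S q) - 1)%nat; rewrite Nat.sub_0_r.
  pose proof (RInt_Fpow_succ_lt q) as Hgap.
  assert (HP : 0 < F v ^ q) by (apply pow_lt; auto).
  set (I0 := RInt (fun u => F u ^ q) 0 v) in *.
  set (I1 := RInt (fun u => F u ^ S q) 0 v) in *.
  assert (/ (F v * F v ^ q) * I1 < / F v ^ q * I0); [|simpl; lra].
  apply Rlt_le_trans with (/ (F v * F v ^ q) * (F v * I0)).
  - apply Rmult_lt_compat_l; auto.
    apply Rinv_0_lt_compat, Rmult_lt_0_compat; auto.
  - right; field; lra.
Qed.

Lemma be0_bounds m : 0 <= be0 F v m <= v.
Proof.
  pose proof v_pos; unfold be0; destruct (2 <=? m)%nat; [apply be_bounds|lra].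
Qed.

Lemma be0_le_succ m : be0 F v m <= be0 F v (S m).
Proof.
  unfold be0; destruct (2 <=? m)%nat eqn:Hm.
  - apply Nat.leb_le in Hm; destruct m as [|q]; [lia|].
    replace (2 <=? S (S q))%nat with true by (symmetry; apply Nat.leb_le; lia).
    left; apply be_lt_succ.
  - destruct (2 <=? S m)%nat; [apply be_bounds|apply Rle_refl].
Qed.

Lemma be0_lt_succ m : (2 <= m)%nat -> be0 F v m < be0 F v (S m).
Proof.
  intros Hm; destruct m as [|q]; [lia|]; unfold be0.
  replace (2 <=? S q)%nat with true by (symmetry; apply Nat.leb_le; lia).
  replace (2 <=? S (S q))%nat with true by (symmetry; apply Nat.leb_le; lia).
  apply be_lt_succ.
Qed.

Lemma be0_mono m m' : (m <= m')%nat -> be0 F v m <= be0 F v m'.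
Proof.
  induction 1 as [|m' _ IH]; [apply Rle_refl|].
  eapply Rle_trans; [apply IH|apply be0_le_succ].
Qed.

Lemma be0_strict m m' : (2 <= m)%nat -> (m < m')%nat -> be0 F v m < be0 F v m'.
Proof.
  intros Hm; induction 1 as [|m' _ IH]; [apply be0_lt_succ; auto|].
  eapply Rlt_le_trans; [apply IH|apply be0_le_succ].
Qed.

Variables (gA : nat -> R) (kap : nat).
Hypothesis gA_supp : forall a, (kap < a)%nat -> gA a = 0.
Hypothesis gA_nonneg : forall a, 0 <= gA a.
Hypothesis gA_sum : sum_n gA kap = 1.
Hypothesis gA_0 : gA 0%nat = 0.

(* Dissolving a club of size [k] replaces its single bidder by [k] singletons, i.e.
   adds [k - 1] draws of [gA], each of size at least one. *)
Lemma club_price_lt k j : (2 <= k)%nat -> 0 < gA k ->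
  Esum gA kap j (fun y => be0 F v (k + y)) <
  Esum gA kap (k - 1 + j) (fun y => be0 F v (1 + y)).
Proof.
  intros Hk Hgk.
  replace (k - 1)%nat with (S (k - 2)) by lia.
  rewrite (Esum_ext _ _ _ _ (fun y => be0 F v (1 + (S (k - 2) + y))))
    by (intros; f_equal; lia).
  apply (Esum_add_draws_gt gA kap gA_supp gA_nonneg gA_sum gA_0 k (k - 2) j
           (fun y => be0 F v (1 + y))); auto.
  - intros m m' Hm; apply be0_mono; lia.
  - intros m m' Hm Hmm'; apply be0_strict; lia.
Qed.

End Bids.

Lemma beP_Pnk F v gA kap n k' : (forall a, (kap < a)%nat -> gA a = 0) ->
  beP F v (Pnk gA n k') = Esum gA kap (n - 1) (fun y => be0 F v (k' + y)).
Proof.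
  intros Hsupp; unfold beP, Pnk.
  rewrite (Series_incr_n_aux _ k').
  - rewrite <- Series_sumdist by auto; apply Series_ext; intros y.
    replace (k' <=? k' + y)%nat with true by (symmetry; apply Nat.leb_le; lia).
    replace (k' + y - k')%nat with y by lia.
    unfold be0; destruct (2 <=? k' + y)%nat; ring.
  - intros m Hm; replace (k' <=? m)%nat with false by (symmetry; apply Nat.leb_nle; lia).
    destruct (2 <=? m)%nat; ring.
Qed.

Lemma winprob_bounds F v N : 0 < F v <= 1 -> 0 < winprob F v N <= 1.
Proof.
  intros HF; unfold winprob; split; [apply pow_lt; lra|].
  rewrite <- (pow1 (N - 1)); apply pow_incr; lra.
Qed.

Theorem theorem2 (F : R -> R) (gC gA : nat -> R) (kappa k : nat) (v : R)
  (* F: continuous (atomless) CDF on the nonnegative reals *)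
  (HFcont : forall x, continuity_pt F x)
  (HFmono : forall x y, x <= y -> F x <= F y)
  (HF0 : forall x, x <= 0 -> F x = 0)
  (HFlim : is_lim F p_infty (Finite 1))
  (* gamma_C: distribution of the number of potential coordinators *)
  (HgC_nonneg : forall n, 0 <= gC n)
  (HgC_sum : is_series gC 1)
  (HgC0 : gC 0%nat = 0) (HgC1 : gC 1%nat = 0)
  (* gamma_A: distribution on {1,...,kappa} *)
  (Hkappa : (2 <= kappa)%nat)
  (HgA_nonneg : forall j, 0 <= gA j)
  (HgA_supp : forall j, (j = 0 \/ kappa < j)%nat -> gA j = 0)
  (HgA_sum : sum_n gA kappa = 1)
  (HgA1 : gA 1%nat < 1)
  (* standing assumption *)
  (Hstanding : forall P P' : nat -> R, is_dist P -> is_dist P' -> ltP P P' ->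
                 forall w, 0 < F w -> beP F w P < beP F w P')
  (* agent i is in a bidding club of size k >= 2, with valuation v *)
  (Hk : (2 <= k)%nat) (HgAk : 0 < gA k)
  (Hv : 0 < F v) :
  util_b F gC gA k v < util_a F gC gA k v.
Proof.
  assert (Hsupp : forall a, (kappa < a)%nat -> gA a = 0) by (intros; apply HgA_supp; auto).
  assert (HgA0 : gA 0%nat = 0) by (apply HgA_supp; auto).
  assert (HFv : 0 < F v <= 1) by (split; [|apply (nondecreasing_le_lim F)]; auto).
  set (W n := Esum gA kappa (n - 1) (fun S => winprob F v (k + S))).
  assert (HW : forall n, 0 < W n <= 1).
  { intros n; split; [apply (Esum_pos gA kappa Hsupp HgA_nonneg HgA_sum k)|
                      apply (Esum_bounds gA kappa Hsupp HgA_nonneg HgA_sum _ _ 0)];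
      auto; intros y; pose proof (winprob_bounds F v (k + y) HFv); lra. }
  assert (Hprice : forall n k', 0 <= beP F v (Pnk gA n k') <= v).
  { intros; rewrite (beP_Pnk _ _ _ kappa) by auto.
    apply Esum_bounds; auto; intros; apply be0_bounds; auto. }
  assert (Hbound : forall n c, 0 <= c <= v -> Rabs (W n * (v - c)) <= v).
  { intros n c Hc; specialize (HW n); rewrite Rabs_pos_eq; nra. }
  assert (Hexpand : forall c : nat -> R,
    Series (fun n => gC n *
      Series (fun S => sumdist gA (n - 1) S * winprob F v (k + S) * (v - c n))) =
    Series (fun n => gC n * (W n * (v - c n)))).
  { intros c; apply Series_ext; intros n; rewrite (Series_sumdist_mul_r _ kappa); auto. }
  unfold util_a, util_b; rewrite 2!Hexpand.
  apply (Series_weighted_lt _ _ _ v); auto; intros n.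
  apply Rmult_lt_compat_l; [apply HW|].
  rewrite !(beP_Pnk _ _ _ kappa) by auto.
  replace (n - 1 + k - 1)%nat with (k - 1 + (n - 1))%nat by lia.
  apply Rplus_lt_compat_l, Ropp_lt_contravar, club_price_lt; auto.
Qed.
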